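(* Let $G=(V,E,s)$ be a flow graph with dominator tree $D$, let $(x,y)\in E$ with $x$ reachable from $s$, and let $G'$ be obtained from $G$ by deleting $(x,y)$, where $y$ becomes unreachable from $s$ in $G'$. If a vertex $v$ that is reachable in both $G$ and $G'$ is affected by the deletion, i.e., $d'(v)\neq d(v)$, then there is a path $P$ in $G$ from $y$ to $v$ such that $\mathit{depth}(d(v))<\mathit{depth}(w)$ for all vertices $w$ on $P$.
   Context: A flow graph $G=(V,E,s)$ is a directed graph with start vertex $s$; a vertex is reachable if there is a path from $s$ to it. For reachable vertices, $w$ dominates $v$ if every path from $s$ to $v$ contains $w$. The immediate dominator $d(v)$ of a reachable $v\neq s$ is the proper dominator of $v$ that is dominated by all other proper dominators of $v$. The dominator tree $D$ is the tree on the reachable vertices rooted at $s$ in which the parent of $v\neq s$ is $d(v)$; $\mathit{depth}(w)$ is the depth of $w$ in $D$ (the dominator tree of $G$, before the deletion). $d'(v)$ denotes the immediate dominator of $v$ in $G'$. *)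

From mathcomp Require Import all_boot.
Set Implicit Arguments. Unset Strict Implicit. Unset Printing Implicit Defensive.

Section FlowGraph.
Variables (V : finType) (E : rel V) (s : V).

Definition reachable (v : V) : Prop :=
  exists p : seq V, path E s p /\ last s p = v.

Definition dominates (w v : V) : Prop :=
  reachable w /\ reachable v /\
  forall p : seq V, path E s p -> last s p = v -> w \in s :: p.

Definition pdominates (w v : V) : Prop := dominates w v /\ w <> v.

Definition idom (v u : V) : Prop :=
  v <> s /\ pdominates u v /\ forall w, pdominates w v -> w <> u -> dominates w u.

(* depth in the dominator tree D (root s, parent of v <> s is d(v)) *)
Inductive depth : V -> nat -> Prop :=
  | depth_root : reachable s -> depth s 0
  | depth_step v u k : idom v u -> depth u k -> depth v k.+1.

End FlowGraph.

Definition del_edge (V : finType) (E : rel V) (x y : V) : rel V :=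
  [rel a b | E a b && ((a, b) != (x, y))].

From mathcomp Require Import all_boot.
From Stdlib Require Import Classical.
Set Implicit Arguments. Unset Strict Implicit. Unset Printing Implicit Defensive.

(* The new immediate dominator dv' of v is dominated in G' by the old one dv,
   so dv' cannot dominate v in G: it would then dominate dv, and the two would
   coincide.  Hence some path of G from s to v avoids dv'.  That path must use
   the deleted edge, so its part after the last visit to y is a path of G' from
   y to v avoiding dv'.  This part avoids dv as well, since otherwise dv' would
   dominate dv in G'.  So every vertex w on it is properly dominated by dv in G
   (an s-w path avoiding dv would extend to an s-v path avoiding dv), and hence
   lies strictly deeper than dv in the dominator tree. *)

Lemma split_at_last (T : eqType) (P : T -> Prop) (x0 : T) (p : seq T) :
  (exists2 z, z \in x0 :: p & P z) ->
  exists p1 p2, [/\ p = p1 ++ p2, P (last x0 p1) & forall z, z \in p2 -> ~ P z].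
Proof.
elim/last_ind: p => [|p z IHp] [z0 z0p Pz0].
  by exists [::], [::]; move: z0p Pz0; rewrite mem_seq1 => /eqP ->.
have [Pz | nPz] := classic (P z).
  by exists (rcons p z), [::]; rewrite cats0 last_rcons.
have [|p1 [p2 [-> Pp1 nPp2]]] := IHp.
  exists z0 => //; move: z0p; rewrite -rcons_cons mem_rcons inE.
  by case/orP=> // /eqP z0z; case: nPz; rewrite -z0z.
exists p1, (rcons p2 z); split=> //; first by rewrite rcons_cat.
by move=> z'; rewrite mem_rcons inE => /orP [/eqP -> | /nPp2].
Qed.

Section Dominators.
Variables (V : finType) (E : rel V) (s : V).

Lemma reachable_on_path w0 p w :
  reachable E s w0 -> path E w0 p -> w \in w0 :: p -> reachable E s w.
Proof.
move=> [r [Er lr]] Ep /splitPl w_p; case: w_p Ep => p1 p2 lp1.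
rewrite cat_path => /andP [Ep1 _].
by exists (r ++ p1); rewrite cat_path last_cat lr Er Ep1.
Qed.

Lemma dominates_on_path a v w0 p w :
  dominates E s a v -> reachable E s w -> path E w0 p -> last w0 p = v ->
  a \notin p -> w \in w0 :: p -> dominates E s a w.
Proof.
move=> [ra [_ a_v]] rw Ep lp ap /splitPl w_p; case: w_p Ep lp ap => p1 p2 lp1.
rewrite cat_path last_cat mem_cat negb_or => /andP [_ Ep2] lp2 /andP [_ ap2].
split=> //; split=> // r Er lr.
rewrite lp1 in Ep2 lp2.
have := a_v (r ++ p2); rewrite cat_path last_cat Er lr Ep2 lp2.
by rewrite -cat_cons mem_cat (negbTE ap2) orbF; apply.
Qed.

Lemma dominates_root a : dominates E s a s -> a = s.
Proof. by move=> [_ [_ a_s]]; apply/eqP; rewrite -mem_seq1; apply: a_s. Qed.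

Lemma dominates_antisym a b :
  dominates E s a b -> dominates E s b a -> a = b.
Proof.
move=> [_ [_ a_b]] [_ [[p [Ep lp]] b_a]]; case: (eqVneq a b) => // neq_ab.
case: (shortenP Ep) lp => p' Ep' uniq_p' _ lp'.
have /splitPl b_p' : b \in s :: p' by apply: b_a.
case: b_p' Ep' uniq_p' lp' => p1 p2 lp1 Ep12 uniq_p12 lp12.
have a_p1 : a \in s :: p1 by apply: a_b; move: Ep12; rewrite cat_path => /andP [].
have a_p2 : a \in p2.
  case: p2 lp12 {Ep12 uniq_p12} => [|c p2]; rewrite last_cat lp1 /= => lp2.
    by rewrite lp2 eqxx in neq_ab.
  by rewrite -lp2 mem_last.
move: uniq_p12; rewrite -cat_cons cat_uniq => /and3P [_ /hasPn disjoint_p12 _].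
by have := disjoint_p12 a a_p2; rewrite /= a_p1.
Qed.

Lemma idom_unique w u1 u2 : idom E s w u1 -> idom E s w u2 -> u1 = u2.
Proof.
move=> [_ [pdom_u1 u1_max]] [_ [pdom_u2 u2_max]].
case: (eqVneq u1 u2) => // neq_u12.
apply: dominates_antisym; [apply: u2_max | apply: u1_max] => // eq_u;
  by rewrite eq_u eqxx in neq_u12.
Qed.

Lemma idom_on_path p w : path E s p -> last s p = w -> w <> s ->
  exists p1 p2, [/\ p = p1 ++ p2, p2 <> [::] & idom E s w (last s p1)].
Proof.
move=> Ep lp w_neq_s.
have rw : reachable E s w by exists p.
have pdom_s : pdominates E s s w.
  split; last by move/esym.
  by split; [exists [::] | split=> // q _ _; apply: mem_head].
have [|p1 [p2 [def_p pdom_u no_pdom_p2]]] := @split_at_last _ (pdominates E s ^~ w) s p.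
  by exists s; first exact: mem_head.
exists p1, p2; split=> //.
  by move=> p2_nil; apply: pdom_u.2; rewrite -lp def_p p2_nil cats0.
split=> //; split=> // z pdom_z neq_zu.
move: Ep lp; rewrite def_p cat_path last_cat => /andP [Ep1 Ep2] lp2.
apply: dominates_on_path (pdom_z.1) _ Ep2 lp2 _ (mem_head _ _).
  by exists p1.
by apply/negP => /no_pdom_p2.
Qed.

Lemma depth_unique w k1 k2 : depth E s w k1 -> depth E s w k2 -> k1 = k2.
Proof.
move=> dk1; elim: dk1 k2 => [_ | v u k idom_u _ IH] k2 dk2.
  by inversion dk2 as [| v' u' k' [] ].
inversion dk2 as [_ | v' u' k' idom_u' du']; subst; first by case: idom_u.
by rewrite -(idom_unique idom_u idom_u') in du'; rewrite (IH _ du').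
Qed.

Lemma depth_exists w : reachable E s w -> exists k, depth E s w k.
Proof.
move=> [p [Ep lp]]; have [n] := ubnP (size p); elim: n => // n IH in p w Ep lp *.
rewrite ltnS => size_p.
case: (eqVneq w s) => [-> | /eqP w_neq_s]; first by exists 0; apply: depth_root; exists [::].
have [p1 [p2 [def_p p2_nonnil idom_u]]] := idom_on_path Ep lp w_neq_s.
have Ep1 : path E s p1 by move: Ep; rewrite def_p cat_path => /andP [].
have [|k dk] := IH p1 _ Ep1 erefl.
  move: size_p; rewrite def_p size_cat; case: p2 {def_p} p2_nonnil => // c p2 _.
  by rewrite addnS => /(leq_ltn_trans (leq_addr _ _)).
by exists k.+1; apply: depth_step idom_u dk.
Qed.

Lemma depth_lt_pdominates a w ka k :
  pdominates E s a w -> depth E s a ka -> depth E s w k -> ka < k.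
Proof.
move=> + + dw; elim: dw a ka => [_ | v u kv idom_u du IH] a ka pdom_a da.
  by case: pdom_a => /dominates_root.
case: (eqVneq a u) => [eq_au | /eqP neq_au].
  by rewrite eq_au in da; rewrite (depth_unique da du).
have pdom_au : pdominates E s a u by split=> //; apply: idom_u.2.2.
exact: ltnW (IH a ka pdom_au da).
Qed.
End Dominators.

Section Subgraph.
Variables (V : finType) (E E' : rel V) (s : V).
Hypothesis sub_E'E : subrel E' E.

Lemma reachable_subrel w : reachable E' s w -> reachable E s w.
Proof. by move=> [p [E'p lp]]; exists p; split=> //; apply: sub_path E'p. Qed.

Lemma dominates_subrel a b :
  dominates E s a b -> reachable E' s a -> reachable E' s b -> dominates E' s a b.
Proof.
move=> [_ [_ a_b]] ra rb; split=> //; split=> // p E'p lp.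
by apply: a_b lp; apply: sub_path E'p.
Qed.
End Subgraph.

Lemma del_edge_subrel (V : finType) (E : rel V) x y : subrel (del_edge E x y) E.
Proof. by move=> a b /andP []. Qed.

Lemma path_del_edge (V : finType) (E : rel V) x y a p :
  path E a p -> y \notin p -> path (del_edge E x y) a p.
Proof.
elim: p a => [|b p IHp] a //=; rewrite inE negb_or => /andP [Eab Ep] /andP [neq_yb yp].
by rewrite IHp // andbT /del_edge /= Eab; apply: contra neq_yb => /eqP [_ ->].
Qed.

Section AffectedVertex.
Variables (V : finType) (E : rel V) (s x y v dv dv' : V).
Local Notation E' := (del_edge E x y).
Let sub_E'E : subrel E' E := @del_edge_subrel V E x y.
Hypotheses (rv' : reachable E' s v) (idom_dv : idom E s v dv)
  (idom_dv' : idom E' s v dv') (neq_dv'dv : dv' <> dv).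

Lemma dominates_new_idom : dominates E' s dv dv'.
Proof.
have [_ [[dom_dv neq_dvv] _]] := idom_dv.
have r'dv : reachable E' s dv.
  have [p [E'p lp]] := rv'.
  apply: reachable_on_path (E'p) _; first by exists [::].
  by apply: dom_dv.2.2 lp; apply: sub_path sub_E'E _ _ E'p.
have neq_dvdv' : dv <> dv' by move/esym.
apply: idom_dv'.2.2 neq_dvdv'; split=> //.
exact: (dominates_subrel sub_E'E dom_dv r'dv rv').
Qed.

Lemma path_avoiding_new_idom :
  exists q, [/\ path E s q, last s q = v & dv' \notin s :: q].
Proof.
apply: NNPP => no_path.
have [_ [[dom'_dv' neq_dv'v] _]] := idom_dv'.
have dom_dv'v : dominates E s dv' v.
  split; first exact: (reachable_subrel sub_E'E dom'_dv'.1).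
  split; first exact: (reachable_subrel sub_E'E rv').
  move=> q Eq lq; apply: NNPP => dv'q; apply: no_path.
  by exists q; split=> //; apply/negP.
have dom_dv'dv : dominates E s dv' dv by apply: idom_dv.2.2.
apply: neq_dv'dv; apply: dominates_antisym dominates_new_idom.
exact: (dominates_subrel sub_E'E dom_dv'dv dom'_dv'.1 dominates_new_idom.1).
Qed.

Lemma path_from_y_avoiding_new_idom :
  exists q, [/\ path E' y q, last y q = v & dv' \notin q].
Proof.
have [q [Eq lq dv'q]] := path_avoiding_new_idom.
have [_ [[dom'_dv' _] _]] := idom_dv'.
have y_q : y \in q.
  apply: NNPP => /negP y_q; apply: (negP dv'q).
  exact: dom'_dv'.2.2 (path_del_edge x Eq y_q) lq.
have [|q1 [q2 [def_q y_last no_y_q2]]] := @split_at_last _ (eq y) s q.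
  by exists y; first exact: mem_behead.
move: Eq lq dv'q; rewrite def_q cat_path last_cat -y_last => /andP [_ Eq2] lq2.
rewrite -cat_cons mem_cat negb_or => /andP [_ dv'q2].
exists q2; split=> //; apply: path_del_edge Eq2 _.
by apply/negP => /no_y_q2.
Qed.

Lemma old_idom_notin_path q :
  path E' y q -> last y q = v -> dv' \notin q -> dv \notin y :: q.
Proof.
move=> E'q lq dv'q; apply/negP => dv_q; apply: neq_dv'dv.
have [_ [[dom'_dv' _] _]] := idom_dv'.
apply: dominates_antisym dominates_new_idom.
exact: (dominates_on_path dom'_dv' dominates_new_idom.1 E'q lq dv'q dv_q).
Qed.
End AffectedVertex.

Theorem lemma5 (V : finType) (E : rel V) (s x y : V) :
  E x y ->
  reachable E s x ->
  ~ reachable (del_edge E x y) s y ->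
  forall v : V,
    reachable E s v ->
    reachable (del_edge E x y) s v ->
    forall dv dv' : V,
      idom E s v dv ->
      idom (del_edge E x y) s v dv' ->
      dv' <> dv ->
      exists p : seq V,
        [/\ path E y p, last y p = v &
            exists kd : nat, depth E s dv kd /\
              forall w, w \in y :: p -> exists k, depth E s w k /\ kd < k].
Proof.
move=> Exy rx _ v _ rv' dv dv' idom_dv idom_dv' neq_dv'dv.
have [q [E'q lq dv'q]] := path_from_y_avoiding_new_idom rv' idom_dv idom_dv' neq_dv'dv.
have dv_yq := old_idom_notin_path rv' idom_dv idom_dv' neq_dv'dv E'q lq dv'q.
have dv_q : dv \notin q by apply: contra dv_yq => dv_q; rewrite inE dv_q orbT.
have Eq : path E y q := sub_path (@del_edge_subrel _ _ x y) E'q.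
have ry : reachable E s y.
  by apply: (reachable_on_path rx _ (mem_last x [:: y])); rewrite /= Exy.
have [_ [[dom_dv _] _]] := idom_dv.
have [kd dkd] := depth_exists dom_dv.1.
exists q; split=> //; exists kd; split=> // w w_q.
have rw := reachable_on_path ry Eq w_q.
have pdom_dv : pdominates E s dv w.
  split; first exact: (dominates_on_path dom_dv rw Eq lq dv_q w_q).
  by move=> eq_dvw; rewrite eq_dvw w_q in dv_yq.
have [k dk] := depth_exists rw.
by exists k; split=> //; apply: depth_lt_pdominates pdom_dv dkd dk.
Qed.
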